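(* Consider a node resource $(\tau,u)\in R^V_S$. Let $0<\varepsilon\le1$ be such that $d_{\max}(r,\tau,u)/d_S(\tau,u)\le\varepsilon$ for all $r\in\mathcal R$. Let $\Delta=\sum_{r\in\mathcal R}\big(A_{\max}(r,\tau,u)/d_{\max}(r,\tau,u)\big)^2$ and $\beta=1+\varepsilon\sqrt{2\Delta\log(|V_S|\cdot|\mathcal T|)}$. Then $\mathbb P\big(A_{\tau,u}\ge\beta\cdot d_S(\tau,u)\big)\le(|V_S|\cdot|\mathcal T|)^{-4}$.
   Context: Substrate: directed graph $G_S=(V_S,E_S)$, node types $\mathcal T$, $V_S^\tau\subseteq V_S$, node resources $R^V_S=\{(\tau,u):u\in V_S^\tau\}$, resources $R_S=R^V_S\cup E_S$, capacities $d_S(x,y)>0$. Requests $r\in\mathcal R$: directed graph $G_r=(V_r,E_r)$, types $\tau_r$, demands $d_r(i),d_r(i,j)\ge0$, allowed node sets $V_S^{r,i}\subseteq V_S^{\tau_r(i)}$, allowed edge sets $E_S^{r,i,j}\subseteq E_S$. Valid mappings $m_r$ (each node $i$ to a node of $V_S^{r,i}$, each edge $(i,j)$ to a directed path between the images within $E_S^{r,i,j}$), set $\mathcal M_r$; allocation $A(m_r,\tau,u)=\sum_{i:\tau_r(i)=\tau,m^V_r(i)=u}d_r(i)$, $A(m_r,u,v)=\sum_{(i,j):(u,v)\in m^E_r(i,j)}d_r(i,j)$; $d_{\max}(r,\tau,u)=\max_{i:u\in V_S^{r,i}}d_r(i)$; $A_{\max}(r,x,y)=\max_{m\in\mathcal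 M_r}A(m,x,y)$. Rounding setting (profit variant): for each request $r$ a finite family $\mathcal D_r=\{(f^k_r,m^k_r)\}_k$ with $f^k_r>0$, $m^k_r\in\mathcal M_r$, $\sum_kf^k_r\le1$, obtained by decomposing a feasible solution of the paper's decomposable LP relaxation of the VNEP, so that in particular $\sum_{r\in\mathcal R}\sum_kf^k_rA(m^k_r,x,y)\le d_S(x,y)$ for all $(x,y)\in R_S$. Independently for each $r$, mapping $m^k_r$ is selected with probability $f^k_r$ and no mapping with probability $1-\sum_kf^k_r$; $A_{r,x,y}$ is the allocation of the selected mapping on $(x,y)$ (0 if none) and $A_{x,y}=\sum_rA_{r,x,y}$. *)

From HB Require Import structures.
From mathcomp Require Import all_boot all_order all_algebra.
From mathcomp Require Import boolp reals exp.
Set Implicit Arguments. Unset Strict Implicit. Unset Printing Implicit Defensive.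
Import Order.TTheory GRing.Theory Num.Theory.
Local Open Scope ring_scope.

Record substrate (R : realType) := Substrate {
  sV : finType;
  sT : finType;
  sVt : sT -> {set sV};
  sE : rel sV;
  sdV : sT -> sV -> R;
  sdE : sV -> sV -> R
}.
Arguments sV {R} s.  Arguments sT {R} s.  Arguments sVt {R} s _.
Arguments sE {R} s _ _.  Arguments sdV {R} s _ _.  Arguments sdE {R} s _ _.

Definition wf_substrate (R : realType) (S : substrate R) : Prop :=
  (forall t u, u \in sVt S t -> 0 < sdV S t u) /\
  (forall u v, sE S u v -> 0 < sdE S u v).

Record request (R : realType) (S : substrate R) := Request {
  rV : finType;
  rE : rel rV;
  rtau : rV -> sT S;
  rdV : rV -> R;
  rdE : rV -> rV -> R;
  rVallow : rV -> {set sV S};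
  rEallow : rV -> rV -> rel (sV S)
}.
Arguments rV {R S} r.  Arguments rE {R S} r _ _.  Arguments rtau {R S} r _.
Arguments rdV {R S} r _.  Arguments rdE {R S} r _ _.
Arguments rVallow {R S} r _.  Arguments rEallow {R S} r _ _ _ _.

Definition wf_request (R : realType) (S : substrate R) (q : request S) : Prop :=
  (forall i, 0 <= rdV q i) /\
  (forall i j, rE q i j -> 0 <= rdE q i j) /\
  (forall i, rVallow q i \subset sVt S (rtau q i)) /\
  (forall i j x y, rE q i j -> rEallow q i j x y -> sE S x y).

(* An edge (i,j) is mapped to a directed path, given as the sequence of nodes
   visited after the start node m^V(i); its edges are zip (m^V(i) :: p) p. *)
Record mapping (R : realType) (S : substrate R) (q : request S) := Mapping {
  mV : {ffun rV q -> sV S};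
  mE : rV q -> rV q -> seq (sV S)
}.
Arguments Mapping {R S q} _ _.
Arguments mV {R S q} m.  Arguments mE {R S q} m _ _.

Definition path_edges (T : Type) (s : T) (p : seq T) : seq (T * T) :=
  zip (s :: p) p.

Definition valid_mapping (R : realType) (S : substrate R) (q : request S)
  (m : mapping q) : Prop :=
  (forall i, mV m i \in rVallow q i) /\
  (forall i j, rE q i j ->
     path (rEallow q i j) (mV m i) (mE m i j) /\ last (mV m i) (mE m i j) = mV m j).

Definition Anode (R : realType) (S : substrate R) (q : request S)
  (mv : {ffun rV q -> sV S}) (t : sT S) (u : sV S) : R :=
  \sum_(i | (rtau q i == t) && (mv i == u)) rdV q i.

Definition Aedge (R : realType) (S : substrate R) (q : request S)
  (m : mapping q) (u v : sV S) : R :=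
  \sum_(ij : rV q * rV q | rE q ij.1 ij.2 &&
        ((u, v) \in path_edges (mV m ij.1) (mE m ij.1 ij.2))) rdE q ij.1 ij.2.

Definition dmax (R : realType) (S : substrate R) (q : request S) (u : sV S) : R :=
  \big[Num.max/0]_(i | u \in rVallow q i) rdV q i.

(* A_max(r, tau, u) = max over valid mappings m of A(m,tau,u); since A(m,tau,u)
   only depends on the node part of m, the max ranges over node maps that
   extend to a valid mapping (0 if there is no valid mapping). *)
Definition Amax (R : realType) (S : substrate R) (q : request S)
  (t : sT S) (u : sV S) : R :=
  \big[Num.max/0]_(mv : {ffun rV q -> sV S} |
                   `[< exists me, valid_mapping (Mapping mv me) >]) Anode mv t u.

Definition rounding_family (R : realType) (S : substrate R) (Req : finType)
  (req : Req -> request S) (K : Req -> nat)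
  (f : forall r, 'I_(K r) -> R) (m : forall r, 'I_(K r) -> mapping (req r)) : Prop :=
  (forall r k, 0 < f r k) /\
  (forall r k, valid_mapping (m r k)) /\
  (forall r, \sum_(k < K r) f r k <= 1) /\
  (forall t u, u \in sVt S t ->
     \sum_r \sum_(k < K r) f r k * Anode (mV (m r k)) t u <= sdV S t u) /\
  (forall u v, sE S u v ->
     \sum_r \sum_(k < K r) f r k * Aedge (m r k) u v <= sdE S u v).

(* Outcome: for each request, Some k (mapping m_r^k selected) or None. *)
Definition outcome (Req : finType) (K : Req -> nat) : finType :=
  {dffun forall r : Req, option 'I_(K r)}.

Definition sel_prob (R : realType) (Req : finType) (K : Req -> nat)
  (f : forall r, 'I_(K r) -> R) (r : Req) (o : option 'I_(K r)) : R :=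
  match o with
  | Some k => f r k
  | None => 1 - \sum_(k < K r) f r k
  end.

Definition weight (R : realType) (Req : finType) (K : Req -> nat)
  (f : forall r, 'I_(K r) -> R) (w : outcome K) : R :=
  \prod_(r : Req) sel_prob f (w r).

Definition Prob (R : realType) (Req : finType) (K : Req -> nat)
  (f : forall r, 'I_(K r) -> R) (E : pred (outcome K)) : R :=
  \sum_(w : outcome K | E w) weight f w.

Definition Aalloc (R : realType) (S : substrate R) (Req : finType)
  (req : Req -> request S) (K : Req -> nat)
  (m : forall r, 'I_(K r) -> mapping (req r)) (t : sT S) (u : sV S)
  (w : outcome K) : R :=
  \sum_(r : Req) match w r with
                 | Some k => Anode (mV (m r k)) t u
                 | None => 0
                 end.

Arguments rounding_family {R S Req} req K f m.
Arguments Prob {R Req} K f E.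
Arguments Aalloc {R S Req req K} m t u w.
Arguments dmax {R S} q u.
Arguments Amax {R S} q t u.

(* Under randomized rounding the requests choose their mappings independently,
   so A_{tau,u} is a sum of independent summands A_{r,tau,u} with values in
   [0, A_max(r,tau,u)], and by the LP capacity constraint their means add up to
   at most d_S(tau,u).  Hoeffding's inequality for finite product measures
   (Chernoff's bound combined with Hoeffding's lemma, whose extreme case is a
   Bernoulli variable) gives
     P(A >= beta d) <= exp(-2 (beta d - E A)^2 / sum_r A_max(r)^2).
   Since A_max(r) <= eps d_S(tau,u) * A_max(r) / d_max(r), the denominator is
   at most (eps d_S)^2 Delta, and the choice of beta makes the exponent at
   least 4 log(|V_S| |T|). *)

From HB Require Import structures.
From mathcomp Require Import all_boot all_order all_algebra.
From mathcomp Require Import boolp functions reals interval_inference normedtype.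
From mathcomp Require Import derive sequences realfun convex exp.
From mathcomp Require Import ring lra.
Import Order.TTheory GRing.Theory Num.Theory.
Import numFieldNormedType.Exports.
Local Open Scope ring_scope.

Section exp_inequalities.
Context {R : realType}.
Implicit Types (p x c l w h : R).

Lemma ger0_derive_ge_at0 {f df : R -> R} {x : R} :
  (forall y : R, is_derive y 1 f (df y)) -> (forall y, 0 < y -> 0 <= df y) ->
  0 <= x -> f 0 <= f x.
Proof.
move=> fdf df_ge0 x_ge0.
have fD y : derivable f y 1 by case: (fdf y).
apply: (ger0_derive1_ndecry (a := 0)) => // [y y_gt0|].
- by rewrite derive1E derive_val; apply: df_ge0; rewrite in_itv/= andbT in y_gt0.
- by apply: derivable_within_continuous => y _.
Qed.

Lemma expR_trapezoid w : 0 <= w -> 2 * (expR w - 1) <= w * (expR w + 1).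
Proof.
move=> w_ge0; rewrite -subr_ge0.
pose g : R -> R := id * (expR + cst 1) - cst 2 * (expR - cst 1).
have gD (y : R) : is_derive y 1 g (y * expR y - expR y + 1).
  by apply: is_derive_eq; rewrite /GRing.scale /= /cst !fctE; ring.
have := ger0_derive_ge_at0 gD _ w_ge0; rewrite /g /= !fctE expR0 mul0r subrr mulr0 subr0.
apply=> y _; have := expR_ge1Dx (- y).
rewrite expRN -[X in _ <= X]mul1r ler_pdivlMr ?expR_gt0 //; lra.
Qed.

(* The mean p e^x / (1 - p + p e^x) of the exponentially tilted Bernoulli(p)
   law exceeds p by at most x / 4. *)
Lemma bernoulli_tilted_mean_le p x : 0 <= p <= 1 -> 0 <= x ->
  p * expR x <= (p + x / 4) * (1 - p + p * expR x).
Proof.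
move=> /andP[p_ge0 p_le1] x_ge0.
have x2_ge0 : 0 <= x / 2 by exact: divr_ge0.
have := expR_trapezoid (x / 2) x2_ge0; have := expR_ge1Dx (x / 2).
have -> : expR x = expR (x / 2) ^+ 2 by rewrite expr2 -expRD -splitr.
set z := expR (x / 2); set D := 1 - p + p * z ^+ 2 => z_ge1Dx trapz.
have D_ge0 : 0 <= D by rewrite /D; nra.
have key : (z + 1) * (x * D - 4 * p * (1 - p) * (z ^+ 2 - 1)) =
    D * (x * (z + 1) - 4 * (z - 1)) + 4 * (z - 1) * ((1 - p) - p * z) ^+ 2.
  by rewrite /D; ring.
have : 0 <= x * D - 4 * p * (1 - p) * (z ^+ 2 - 1).
  rewrite -(pmulr_rge0 _ (_ : 0 < z + 1)); last by lra.
  rewrite key; apply: addr_ge0; apply: mulr_ge0; rewrite ?sqr_ge0 //; lra.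
rewrite /D; nra.
Qed.

Lemma bernoulli_mgf_le p h : 0 <= p <= 1 -> 0 <= h ->
  1 - p + p * expR h <= expR (p * h + h ^+ 2 / 8).
Proof.
move=> p01 h_ge0.
(* G x = - mgf(x) e^(-(p x + x^2/8)) is nondecreasing on [0, +oo) and G 0 = -1. *)
pose G : R -> R := - ((cst (1 - p) + cst p * expR) *
                      (expR \o - (cst p * id + cst (8^-1) * id ^+ 2))).
have GD (y : R) : is_derive y 1 G (expR (- (p * y + y ^+ 2 / 8)) *
    ((p + y / 4) * (1 - p + p * expR y) - p * expR y)).
  by apply: is_derive_eq; rewrite /GRing.scale /= /cst !fctE [8^-1 * _]mulrC; field.
have := ger0_derive_ge_at0 GD _ h_ge0; rewrite /G /= !fctE /cst.
rewrite expR0 mulr1 subrK mulr0 expr0n /= mulr0 !addr0 oppr0 expR0 mul1r lerN2.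
rewrite [8^-1 * _]mulrC expRN ler_pdivrMr ?expR_gt0 // mul1r.
apply=> y y_gt0; apply: mulr_ge0; first exact: expR_ge0.
by rewrite subr_ge0; apply: bernoulli_tilted_mean_le => //; exact: ltW.
Qed.

Lemma expR_le_chord l c x : 0 < c -> 0 <= x <= c ->
  expR (l * x) <= 1 + x / c * (expR (l * c) - 1).
Proof.
move=> c_gt0 /andP[x_ge0 x_le_c].
have t_ge0 : 0 <= x / c by exact: divr_ge0 (ltW c_gt0).
have t_le1 : x / c <= 1 by rewrite ler_pdivrMr // mul1r.
have := @convex_expR R (Itv01 t_ge0 t_le1) (l * c) 0.
rewrite !convRE /= expR0 mulr0 addr0 mulrCA divfK ?gt_eqF // => /le_trans.
by apply; rewrite /unstable.onem mulr1; lra.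
Qed.

Lemma hoeffding_lemma (T : finType) (p X : T -> R) (c l : R) :
  (forall o, 0 <= p o) -> \sum_o p o = 1 -> (forall o, 0 <= X o <= c) -> 0 <= l ->
  \sum_o p o * expR (l * X o) <= expR (l * \sum_o p o * X o + l ^+ 2 * c ^+ 2 / 8).
Proof.
move=> p_ge0 p_sum1 X_bnd l_ge0.
have [c_le0|c_gt0] := lerP c 0.
  have X0 o : X o = 0 by have := X_bnd o; lra.
  under eq_bigr do rewrite X0 mulr0 expR0 mulr1.
  rewrite p_sum1 big1 => [|o _]; last by rewrite X0 mulr0.
  rewrite mulr0 add0r -expR0 ler_expR.
  by apply: divr_ge0 => //; apply: mulr_ge0; exact: sqr_ge0.
set mu := \sum_o p o * X o.
have mu_ge0 : 0 <= mu.
  by apply: sumr_ge0 => o _; apply: mulr_ge0 => //; case/andP: (X_bnd o).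
have mu_le_c : mu <= c.
  rewrite -[c]mul1r -p_sum1 mulr_suml; apply: ler_sum => o _.
  by apply: ler_wpM2l => //; case/andP: (X_bnd o).
(* Below the chord of e^(l .) over [0, c], X is dominated by the two-point law
   on {0, c} with the same mean. *)
set q := mu / c.
have q01 : 0 <= q <= 1 by rewrite divr_ge0 ?(ltW c_gt0) //= ler_pdivrMr // mul1r.
apply: (@le_trans _ _ (1 - q + q * expR (l * c))).
  apply: (@le_trans _ _ (\sum_o p o * (1 + X o / c * (expR (l * c) - 1)))).
    by apply: ler_sum => o _; apply: ler_wpM2l => //; exact: expR_le_chord.
  under eq_bigr do rewrite mulrDr mulr1 mulrA mulrA.
  rewrite big_split /= p_sum1 -!mulr_suml -/mu /q; lra.
have := bernoulli_mgf_le q (l * c) q01 (mulr_ge0 l_ge0 (ltW c_gt0)).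
by rewrite /q mulrCA divfK ?gt_eqF // mulrC exprMn.
Qed.

End exp_inequalities.

Lemma big_option (R : Type) (idx : R) (op : Monoid.com_law idx) (T : finType)
    (F : option T -> R) :
  \big[op/idx]_(o : option T) F o = op (F None) (\big[op/idx]_(k : T) F (Some k)).
Proof.
rewrite (bigD1 None) //=; congr (op _ _).
rewrite (reindex_omap Some id); last by case.
by apply: eq_bigl => k /=; rewrite eqxx.
Qed.

Lemma bigA_distr_bigA_dffun (R : comPzSemiRingType) (I : finType) (T_ : I -> finType)
    (F : forall i, T_ i -> R) :
  \prod_i \sum_(t : T_ i) F i t = \sum_(w : {dffun forall i, T_ i}) \prod_i F i (w i).
Proof.
symmetry; rewrite (reindex (@dffun_of_fprod I T_)); last exact/onW_bij/dffun_of_fprod_bij.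
transitivity (\sum_(w : fprod T_) \prod_(i in I) [ffun t => F i t] (w i)).
  by apply: eq_bigr => w _; apply: eq_bigr => i _; rewrite !ffunE.
rewrite (@big_fprod R 0 1 *%R +%R I T_ (fun i => [ffun t => F i t])).
under [RHS]eq_bigr => i _ do rewrite (big_tag (fun i t => F i t) i).
rewrite bigA_distr_big_dep; apply: eq_bigr => g _; apply: eq_bigr => i _.
by rewrite /untag; case: eqP => // e; rewrite ffunE.
Qed.

Definition product_prob {R : realType} {I : finType} {T_ : I -> finType}
    (P : forall i, T_ i -> R) (E : pred {dffun forall i, T_ i}) : R :=
  \sum_(w | E w) \prod_i P i (w i).

Section product_probability.
Context {R : realType} {I : finType} {T_ : I -> finType} {P : forall i, T_ i -> R}.

Hypothesis P_ge0 : forall i t, 0 <= P i t.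
Hypothesis P_sum1 : forall i, \sum_t P i t = 1.

Context {X : forall i, T_ i -> R} {c : I -> R}.
Hypothesis X_bnd : forall i t, 0 <= X i t <= c i.

Let total (w : {dffun forall i, T_ i}) := \sum_(i : I) X i (w i).
Let mean i := \sum_t P i t * X i t.

Lemma chernoff_bound (a l : R) : 0 <= l ->
  product_prob P (fun w => a <= total w) <=
    expR (- (l * a)) * \prod_i \sum_t P i t * expR (l * X i t).
Proof.
move=> l_ge0; rewrite bigA_distr_bigA_dffun mulr_sumr /product_prob big_mkcond /=.
apply: ler_sum => w _; rewrite big_split /= -expR_sum mulrCA -expRD.
have w_ge0 : 0 <= \prod_(i : I) P i (w i) by apply: prodr_ge0.
case: ifP => [aS|_]; last by apply: mulr_ge0 => //; exact: expR_ge0.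
rewrite -[X in X <= _]mulr1 ler_wpM2l // -expR0 ler_expR -mulr_sumr.
by rewrite addrC -mulrN -mulrDr mulr_ge0 // subr_ge0.
Qed.

Lemma hoeffding_chernoff_bound (a l : R) : 0 <= l ->
  product_prob P (fun w => a <= total w) <=
    expR (- (l * (a - \sum_i mean i)) + l ^+ 2 * (\sum_i c i ^+ 2) / 8).
Proof.
move=> l_ge0; apply: le_trans (chernoff_bound a l l_ge0) _.
apply: (@le_trans _ _ (expR (- (l * a)) *
    \prod_i expR (l * mean i + l ^+ 2 * c i ^+ 2 / 8))).
  apply: ler_wpM2l; first exact: expR_ge0.
  apply: ler_prod => i _; rewrite sumr_ge0 => [|t _]; last by rewrite mulr_ge0 ?expR_ge0.
  exact: hoeffding_lemma.
rewrite -expR_sum -expRD ler_expR big_split /= -mulr_sumr -mulr_suml -mulr_sumr.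
by rewrite mulrBr; lra.
Qed.

(* [0 < a] is only needed when all the ranges [c i] vanish. *)
Lemma hoeffding_inequality (a k : R) : 0 < a -> \sum_i mean i <= a ->
  k * \sum_i c i ^+ 2 <= 2 * (a - \sum_i mean i) ^+ 2 ->
  product_prob P (fun w => a <= total w) <= expR (- k).
Proof.
move=> a_gt0 mean_le_a k_le.
have [C_le0|C_gt0] := lerP (\sum_i c i ^+ 2) 0.
  have C0 : \sum_i c i ^+ 2 = 0.
    by apply/eqP; rewrite eq_le C_le0 sumr_ge0 // => i _; exact: sqr_ge0.
  have c0 i : c i = 0.
    apply/eqP; rewrite -sqrf_eq0; apply/eqP.
    by apply: (psumr_eq0P _ C0) => // j _; exact: sqr_ge0.
  have total0 w : total w = 0 by apply: big1 => i _; have := X_bnd i (w i); rewrite c0; lra.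
  rewrite /product_prob big_pred0 ?expR_ge0 // => w.
  by rewrite total0 leNgt a_gt0.
set M := \sum_i mean i in mean_le_a k_le *; set C := \sum_i c i ^+ 2 in C_gt0 k_le *.
have l_ge0 : 0 <= 4 * (a - M) / C by rewrite divr_ge0 ?(ltW C_gt0) // mulr_ge0 // subr_ge0.
apply: le_trans (hoeffding_chernoff_bound a _ l_ge0) _; rewrite ler_expR.
have -> : - (4 * (a - M) / C * (a - M)) + (4 * (a - M) / C) ^+ 2 * C / 8 =
    - (2 * (a - M) ^+ 2 / C) by field; rewrite gt_eqF.
by rewrite lerN2 ler_pdivlMr // mulrC.
Qed.

End product_probability.

(* The hypothesis [y = 0 -> x = 0] makes the junk value [x / 0 = 0] harmless. *)
Lemma sqr_le_scaled_sqr_ratio (R : realFieldType) (x y D : R) :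
  0 <= y <= D -> (y = 0 -> x = 0) -> x ^+ 2 <= D ^+ 2 * (x / y) ^+ 2.
Proof.
move=> /andP[y_ge0 y_le_D] x0.
have [y0|y_neq0] := eqVneq y 0; first by rewrite (x0 y0) mul0r expr0n mulr0.
rewrite -[x in x ^+ 2](divfK y_neq0) exprMn mulrC ler_wpM2r ?sqr_ge0 //.
by rewrite lerXn2r ?nnegrE // (le_trans y_ge0).
Qed.

Lemma hoeffding_exponent_ge (R : realType) (L eps d Delta C M : R) :
  0 <= L -> 0 <= eps -> 0 < d -> 0 <= Delta -> M <= d ->
  C <= (eps * d) ^+ 2 * Delta ->
  4 * L * C <= 2 * ((1 + eps * Num.sqrt (2 * Delta * L)) * d - M) ^+ 2.
Proof.
move=> L_ge0 eps_ge0 d_gt0 Delta_ge0 M_le_d C_le.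
set s := eps * _.
have s_ge0 : 0 <= s by rewrite mulr_ge0 ?sqrtr_ge0.
have sd_ge0 : 0 <= s * d := mulr_ge0 s_ge0 (ltW d_gt0).
have gap : s * d <= (1 + s) * d - M by rewrite mulrDl mul1r; lra.
apply: (@le_trans _ _ (2 * (s * d) ^+ 2)); last first.
  by rewrite ler_pM2l // lerXn2r ?nnegrE // (le_trans sd_ge0).
apply: (@le_trans _ _ (4 * L * ((eps * d) ^+ 2 * Delta))).
  by rewrite ler_wpM2l ?mulr_ge0.
by rewrite !exprMn sqr_sqrtr ?mulr_ge0 // le_eqVlt; apply/orP; left; apply/eqP; ring.
Qed.

Section requests.
Context {R : realType} {S : substrate R} {t : sT S} {u : sV S}.

Lemma dmax_ge0 (q : request S) : 0 <= dmax q u.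
Proof. exact: bigmax_ge_id. Qed.

Lemma Amax_ge0 (q : request S) : 0 <= Amax q t u.
Proof. exact: bigmax_ge_id. Qed.

Lemma Anode_ge0 (q : request S) (mv : {ffun rV q -> sV S}) :
  wf_request q -> 0 <= Anode mv t u.
Proof. by case=> dV_ge0 _; apply: sumr_ge0 => i _. Qed.

Lemma Anode_le_Amax (q : request S) (mp : mapping q) :
  valid_mapping mp -> Anode (mV mp) t u <= Amax q t u.
Proof.
case: mp => mv me valid.
by apply: (@le_bigmax_cond _ _ _ 0 mv _ (fun mv => Anode mv t u)); apply/asboolP; exists me.
Qed.

Lemma Amax_eq0 (q : request S) : dmax q u = 0 -> Amax q t u = 0.
Proof.
move=> dmax0; apply/eqP; rewrite eq_le Amax_ge0 andbT.
apply/bigmax_leP; split => // mv /asboolP[me [allowed _]].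
apply: sumr_le0 => i /andP[_ /eqP mvi]; rewrite -dmax0.
by apply: (@le_bigmax_cond _ _ _ 0 i _ (rdV q)); rewrite -mvi allowed.
Qed.

End requests.

Definition node_alloc {R : realType} {S : substrate R} {Req : finType}
    {req : Req -> request S} {K : Req -> nat} (m : forall r, 'I_(K r) -> mapping (req r))
    (t : sT S) (u : sV S) (r : Req) (o : option 'I_(K r)) : R :=
  if o is Some k then Anode (mV (m r k)) t u else 0.

Lemma sum_sel_prob {R : realType} {Req : finType} {K : Req -> nat}
    (f : forall r, 'I_(K r) -> R) (r : Req) :
  \sum_(o : option 'I_(K r)) sel_prob f o = 1.
Proof. by rewrite big_option /= subrK. Qed.

Section randomized_rounding.
Context {R : realType} {S : substrate R} {Req : finType} {req : Req -> request S}.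
Context {K : Req -> nat} {f : forall r, 'I_(K r) -> R}.
Context {m : forall r, 'I_(K r) -> mapping (req r)} {t : sT S} {u : sV S}.
Hypothesis req_wf : forall r, wf_request (req r).
Hypothesis family : rounding_family req K f m.

Lemma sel_prob_ge0 r (o : option 'I_(K r)) : 0 <= sel_prob f o.
Proof.
have [f_gt0 [_ [f_sum _]]] := family.
by case: o => [k|] /=; [exact/ltW/f_gt0 | rewrite subr_ge0 f_sum].
Qed.

Lemma node_alloc_bounds r (o : option 'I_(K r)) :
  0 <= node_alloc m t u r o <= Amax (req r) t u.
Proof.
have [_ [m_valid _]] := family.
case: o => [k|] /=; last by rewrite lexx Amax_ge0.
by rewrite Anode_ge0 ?Anode_le_Amax.
Qed.

Lemma expected_node_alloc_le : u \in sVt S t ->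
  \sum_r \sum_(o : option 'I_(K r)) sel_prob f o * node_alloc m t u r o <= sdV S t u.
Proof.
have [_ [_ [_ [cap _]]]] := family; move=> /cap; apply: le_trans; apply: ler_sum => r _.
by rewrite big_option /= mulr0 add0r.
Qed.

Lemma Amax_sqr_sum_le (eps : R) : 0 < sdV S t u ->
  (forall r, dmax (req r) u / sdV S t u <= eps) ->
  \sum_r Amax (req r) t u ^+ 2 <=
    (eps * sdV S t u) ^+ 2 * \sum_r (Amax (req r) t u / dmax (req r) u) ^+ 2.
Proof.
move=> d_gt0 dmax_le; rewrite mulr_sumr; apply: ler_sum => r _.
apply: sqr_le_scaled_sqr_ratio; last exact: Amax_eq0.
by rewrite dmax_ge0 -ler_pdivrMr ?dmax_le.
Qed.

End randomized_rounding.

Theorem lemma22 (R : realType) (S : substrate R) (Req : finType)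
  (req : Req -> request S) (K : Req -> nat)
  (f : forall r, 'I_(K r) -> R) (m : forall r, 'I_(K r) -> mapping (req r))
  (t : sT S) (u : sV S) (eps : R) :
  wf_substrate S ->
  (forall r, wf_request (req r)) ->
  rounding_family req K f m ->
  u \in sVt S t ->
  0 < eps <= 1 ->
  (forall r, dmax (req r) u / sdV S t u <= eps) ->
  let Delta := \sum_(r : Req) (Amax (req r) t u / dmax (req r) u) ^+ 2 in
  let n := ((#|sV S| * #|sT S|)%N)%:R : R in
  let beta := 1 + eps * Num.sqrt (2 * Delta * ln n) in
  Prob K f (fun w => beta * sdV S t u <= Aalloc m t u w) <= n ^- 4.
Proof.
move=> [dV_gt0 _] req_wf family ut /andP[eps_gt0 _] dmax_le /=.
set Delta := \sum_r _; set n := (_ * _)%N%:R; set beta := 1 + _.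
have d_gt0 := dV_gt0 t u ut.
have n_ge1 : 1 <= n.
  by rewrite ler1n muln_gt0; apply/andP; split; apply/card_gt0P; [exists u | exists t].
have n_gt0 : 0 < n := lt_le_trans ltr01 n_ge1.
have -> : n ^- 4 = expR (- (4 * ln n)).
  by rewrite mulr_natl -lnXn // expRN lnK // posrE exprn_gt0.
have beta_ge1 : 1 <= beta by rewrite lerDl mulr_ge0 ?sqrtr_ge0 ?ltW.
have mean_le := expected_node_alloc_le family ut.
apply: (hoeffding_inequality (sel_prob_ge0 family) (sum_sel_prob f)
          (node_alloc_bounds req_wf family)).
- by rewrite mulr_gt0 // (lt_le_trans ltr01).
- by apply: le_trans mean_le _; apply: ler_peMl => //; exact: ltW.
apply: hoeffding_exponent_ge => //; first exact: ln_ge0.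
- exact: ltW.
- by apply: sumr_ge0 => r _; exact: sqr_ge0.
- exact: Amax_sqr_sum_le.
Qed.
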